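(* Let $\mathcal{C}$ be a pre-Hilbert $*$-category and let $(s_k\colon A_k\to X)_{k=1}^n$ be a split wide cospan in $\mathcal{C}$. Then the equations \[ t_1=s_1, \qquad t_{m+1} = s_{m+1} - \sum_{k=1}^m t_k (t_k^* t_k)^{-1} t_k^* s_{m+1} \] recursively define an orthogonal wide cospan $(t_k\colon A_k\to X)_{k=1}^n$ of closed monomorphisms such that $t_1\cup t_2\cup\dots\cup t_m = s_1\cup s_2\cup\dots\cup s_m$ (as subobjects of $X$) for each $m\in\{1,\dots,n\}$.
   Context: A $*$-category is a category with a choice of $f^*\colon Y\to X$ for each $f\colon X\to Y$ such that $1^*=1$, $(gf)^*=f^*g^*$, $(f^* )^*=f$. A morphism $f$ is an isometry if $f^*f=1$. An orthonormal biproduct is a biproduct $(X,s_1,r_1,s_2,r_2)$ with $r_k=s_k^*$. A pre-Hilbert $*$-category is a $*$-category with (R1) a zero object, (R2) orthonormal biproducts of all pairs of objects, (R3) an isometric kernel (isometric equaliser with the zero morphism) for every morphism, and (R4) every diagonal $\Delta\colon X\to X\oplus X$ a kernel of some morphism. A pre-Hilbert $*$-category is additive (enriched in abelian groups via its biproducts), which gives the subtraction and sums used. A closed monomorphism is a morphism $f$ with $f^*f$ invertible. A wide cospan $(s_k\colon A_k\to X)_{k=1}^n$ is a finite family of morphisms with common codomain; a retraction of it is a family $(r_k\colon X\to A_k)_{k=1}^n$ with $r_ks_j = 1$ if $j=k$ and $0$ otherwise; the cospan is split if it has a retraction. It is orthogonal if $s_j^*s_k=0$ for all $j\neq k$. The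 union of subobjects is their supremum in the poset of subobjects of $X$; the union of (subobjects represented by) the legs of a split cospan exists and is represented by $\begin{bmatrix}s_1&\cdots&s_n\end{bmatrix}\colon A_1\oplus\dots\oplus A_n\to X$. *)

(* hom-sets are zmodTypes (the additive enrichment of a
   pre-Hilbert *-category); everything else is stated categorically. *)
From HB Require Import structures.
From mathcomp Require Import all_boot all_algebra.
From Stdlib Require Import ClassicalEpsilon.
Set Implicit Arguments. Unset Strict Implicit. Unset Printing Implicit Defensive.
Import GRing.Theory.
Local Open Scope ring_scope.

Record starcat := StarCat {
  Obj : Type;
  Mor : Obj -> Obj -> zmodType;
  comp : forall X Y Z : Obj, Mor Y Z -> Mor X Y -> Mor X Z;
  idm : forall X : Obj, Mor X X;
  star : forall X Y : Obj, Mor X Y -> Mor Y X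
}.
Arguments Mor : clear implicits.
Arguments comp {s X Y Z}.
Arguments idm {s X}.
Arguments star {s X Y}.

Notation "g \oc f" := (comp g f) (at level 40, left associativity).
Notation "f ^*c" := (star f) (at level 2, format "f ^*c").

Section Defs.
Variable C : starcat.

Definition additive_star_category : Prop :=
  (forall (W X Y Z : Obj C) (h : Mor C Y Z) (g : Mor C X Y) (f : Mor C W X),
      h \oc (g \oc f) = (h \oc g) \oc f) /\
  (forall (X Y : Obj C) (f : Mor C X Y), idm \oc f = f /\ f \oc idm = f) /\
  (forall (X Y Z : Obj C) (g g' : Mor C Y Z) (f : Mor C X Y),
      (g + g') \oc f = g \oc f + g' \oc f) /\
  (forall (X Y Z : Obj C) (g : Mor C Y Z) (f f' : Mor C X Y),
      g \oc (f + f') = g \oc f + g \oc f') /\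
  (forall X : Obj C, (idm : Mor C X X)^*c = idm) /\
  (forall (X Y Z : Obj C) (g : Mor C Y Z) (f : Mor C X Y),
      (g \oc f)^*c = f^*c \oc g^*c) /\
  (forall (X Y : Obj C) (f : Mor C X Y), (f^*c)^*c = f).

Definition isometry (X Y : Obj C) (f : Mor C X Y) : Prop := f^*c \oc f = idm.

Definition is_zero_object (Z : Obj C) : Prop :=
  forall X : Obj C,
    (exists f : Mor C X Z, forall g : Mor C X Z, g = f) /\
    (exists f : Mor C Z X, forall g : Mor C Z X, g = f).

Definition is_biproduct (A B P : Obj C) (s1 : Mor C A P) (r1 : Mor C P A)
    (s2 : Mor C B P) (r2 : Mor C P B) : Prop :=
  r1 \oc s1 = idm /\ r2 \oc s2 = idm /\ r2 \oc s1 = 0 /\ r1 \oc s2 = 0 /\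
  (forall (Y : Obj C) (f1 : Mor C Y A) (f2 : Mor C Y B),
     exists h : Mor C Y P, (r1 \oc h = f1 /\ r2 \oc h = f2) /\
       forall h' : Mor C Y P, r1 \oc h' = f1 -> r2 \oc h' = f2 -> h' = h) /\
  (forall (Y : Obj C) (f1 : Mor C A Y) (f2 : Mor C B Y),
     exists h : Mor C P Y, (h \oc s1 = f1 /\ h \oc s2 = f2) /\
       forall h' : Mor C P Y, h' \oc s1 = f1 -> h' \oc s2 = f2 -> h' = h).

Definition is_orthonormal_biproduct (A B P : Obj C) (s1 : Mor C A P)
    (r1 : Mor C P A) (s2 : Mor C B P) (r2 : Mor C P B) : Prop :=
  is_biproduct s1 r1 s2 r2 /\ r1 = s1^*c /\ r2 = s2^*c.

Definition is_kernel (K X Y : Obj C) (f : Mor C X Y) (k : Mor C K X) : Prop :=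
  f \oc k = 0 /\
  forall (W : Obj C) (g : Mor C W X), f \oc g = 0 ->
    exists h : Mor C W K, k \oc h = g /\
      forall h' : Mor C W K, k \oc h' = g -> h' = h.

Definition pre_Hilbert : Prop :=
  additive_star_category /\
  (exists Z : Obj C, is_zero_object Z) /\
  (forall A B : Obj C, exists (P : Obj C) (s1 : Mor C A P)
              (r1 : Mor C P A) (s2 : Mor C B P) (r2 : Mor C P B),
              is_orthonormal_biproduct s1 r1 s2 r2) /\
  (forall (X Y : Obj C) (f : Mor C X Y), exists (K : Obj C)
              (k : Mor C K X), isometry k /\ is_kernel f k) /\
  (forall (X P : Obj C) (s1 : Mor C X P) (r1 : Mor C P X)
              (s2 : Mor C X P) (r2 : Mor C P X) (d : Mor C X P),
              is_orthonormal_biproduct s1 r1 s2 r2 ->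
              r1 \oc d = idm -> r2 \oc d = idm ->
              exists (Y : Obj C) (f : Mor C P Y), is_kernel f d).

Definition is_inverse (X : Obj C) (f g : Mor C X X) : Prop :=
  g \oc f = idm /\ f \oc g = idm.

Definition invertible (X : Obj C) (f : Mor C X X) : Prop :=
  exists g : Mor C X X, is_inverse f g.

(* the inverse of an invertible endomorphism (junk value 0 otherwise) *)
Definition minv (X : Obj C) (f : Mor C X X) : Mor C X X :=
  match excluded_middle_informative (invertible f) with
  | left H => proj1_sig (constructive_indefinite_description _ H)
  | right _ => 0
  end.

Definition closed_mono (A X : Obj C) (f : Mor C A X) : Prop :=
  invertible (f^*c \oc f).

Definition mono (A X : Obj C) (f : Mor C A X) : Prop :=
  forall (W : Obj C) (g h : Mor C W A), f \oc g = f \oc h -> g = h.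

Definition sub_le (A B X : Obj C) (f : Mor C A X) (g : Mor C B X) : Prop :=
  exists h : Mor C A B, f = g \oc h.

Definition is_union (U X : Obj C) (u : Mor C U X) (A : nat -> Obj C)
    (f : forall k, Mor C (A k) X) (m : nat) : Prop :=
  mono u /\ (forall k, (k < m)%N -> sub_le (f k) u) /\
  (forall (V : Obj C) (v : Mor C V X), mono v ->
     (forall k, (k < m)%N -> sub_le (f k) v) -> sub_le u v).

Definition split_cospan (n : nat) (X : Obj C) (A : nat -> Obj C)
    (f : forall k, Mor C (A k) X) : Prop :=
  exists r : forall k, Mor C X (A k),
    (forall k, (k < n)%N -> r k \oc f k = idm) /\
    (forall j k, (j < n)%N -> (k < n)%N -> j <> k -> r k \oc f j = 0).

Definition orthogonal_cospan (n : nat) (X : Obj C) (A : nat -> Obj C)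
    (f : forall k, Mor C (A k) X) : Prop :=
  forall j k, (j < n)%N -> (k < n)%N -> j <> k -> (f j)^*c \oc f k = 0.

End Defs.

(** The Gram-Schmidt process of a split cospan stays inside the right ideal
    generated by its first legs: [t_m] is [s_m] minus a combination of
    [t_0, ..., t_(m-1)], so [t_0, ..., t_(m-1)] and [s_0, ..., s_(m-1)]
    generate the same ideal of morphisms into [X], hence have the same
    subobject union, which exists because [[s_0 ... s_(m-1)]] is split by
    [sum_k inj_k r_k].  A retraction [r] of [s] is lower-triangular against
    [t], so [r_k t_k = 1]; split monomorphisms are closed because they
    differ from an isometric kernel by an isomorphism.  Orthogonality is the
    usual induction: in [t_j^* t_m] only the [j]-th projection term survives,
    and it cancels [t_j^* s_m]. *)
From Pilot Require Import Defs.
From mathcomp Require Import all_boot all_algebra.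
From Stdlib Require Import ClassicalEpsilon.
Set Implicit Arguments. Unset Strict Implicit. Unset Printing Implicit Defensive.
Import GRing.Theory.
Local Open Scope ring_scope.

Section AdditiveStarCategory.
Variable C : starcat.
Hypothesis HA : additive_star_category C.

Lemma compA (W X Y Z : Obj C) (h : Mor C Y Z) (g : Mor C X Y) (f : Mor C W X) :
  h \oc (g \oc f) = (h \oc g) \oc f.
Proof. by case: HA => H _; apply: H. Qed.

Lemma comp1m (X Y : Obj C) (f : Mor C X Y) : idm \oc f = f.
Proof. by case: HA => _ [H _]; case: (H _ _ f). Qed.

Lemma compm1 (X Y : Obj C) (f : Mor C X Y) : f \oc idm = f.
Proof. by case: HA => _ [H _]; case: (H _ _ f). Qed.

Lemma compDl (X Y Z : Obj C) (g g' : Mor C Y Z) (f : Mor C X Y) :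
  (g + g') \oc f = g \oc f + g' \oc f.
Proof. by case: HA => _ [_ [H _]]; apply: H. Qed.

Lemma compDr (X Y Z : Obj C) (g : Mor C Y Z) (f f' : Mor C X Y) :
  g \oc (f + f') = g \oc f + g \oc f'.
Proof. by case: HA => _ [_ [_ [H _]]]; apply: H. Qed.

Lemma star1 (X : Obj C) : (idm : Mor C X X)^*c = idm.
Proof. by case: HA => _ [_ [_ [_ [H _]]]]; apply: H. Qed.

Lemma starM (X Y Z : Obj C) (g : Mor C Y Z) (f : Mor C X Y) :
  (g \oc f)^*c = f^*c \oc g^*c.
Proof. by case: HA => _ [_ [_ [_ [_ [H _]]]]]; apply: H. Qed.

Lemma starK (X Y : Obj C) (f : Mor C X Y) : (f^*c)^*c = f.
Proof. by case: HA => _ [_ [_ [_ [_ [_ H]]]]]; apply: H. Qed.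

Lemma star_comp_star (X Y Z : Obj C) (g : Mor C X Z) (f : Mor C Y Z) :
  (g^*c \oc f)^*c = f^*c \oc g.
Proof. by rewrite starM starK. Qed.

Lemma compm0 (X Y Z : Obj C) (g : Mor C Y Z) : g \oc (0 : Mor C X Y) = 0.
Proof. by apply: (addrI (g \oc 0)); rewrite -compDr !addr0. Qed.

Lemma comp0m (X Y Z : Obj C) (f : Mor C X Y) : (0 : Mor C Y Z) \oc f = 0.
Proof. by apply: (addrI (0 \oc f)); rewrite -compDl !addr0. Qed.

Lemma compmN (X Y Z : Obj C) (g : Mor C Y Z) (f : Mor C X Y) :
  g \oc (- f) = - (g \oc f).
Proof. by apply: (addrI (g \oc f)); rewrite -compDr !subrr compm0. Qed.

Lemma compNm (X Y Z : Obj C) (g : Mor C Y Z) (f : Mor C X Y) :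
  (- g) \oc f = - (g \oc f).
Proof. by apply: (addrI (g \oc f)); rewrite -compDl !subrr comp0m. Qed.

Lemma compBr (X Y Z : Obj C) (g : Mor C Y Z) (f f' : Mor C X Y) :
  g \oc (f - f') = g \oc f - g \oc f'.
Proof. by rewrite compDr compmN. Qed.

Lemma compBl (X Y Z : Obj C) (g g' : Mor C Y Z) (f : Mor C X Y) :
  (g - g') \oc f = g \oc f - g' \oc f.
Proof. by rewrite compDl compNm. Qed.

Lemma comp_sumr (X Y Z : Obj C) (g : Mor C Y Z) m (F : 'I_m -> Mor C X Y) :
  g \oc (\sum_(k < m) F k) = \sum_(k < m) (g \oc F k).
Proof. exact: (big_morph (fun f => g \oc f) (compDr g) (compm0 _ g)). Qed.

Lemma comp_suml (X Y Z : Obj C) (f : Mor C X Y) m (F : 'I_m -> Mor C Y Z) :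
  (\sum_(k < m) F k) \oc f = \sum_(k < m) (F k \oc f).
Proof. exact: (big_morph (fun g => g \oc f) (fun a b => compDl a b f) (comp0m _ f)). Qed.

Lemma minvP (X : Obj C) (f : Mor C X X) : invertible f -> is_inverse f (minv f).
Proof.
rewrite /minv; case: excluded_middle_informative => // H _.
by case: constructive_indefinite_description.
Qed.

Lemma closed_mono_isometry_comp (A K X : Obj C) (k : Mor C K X) (h : Mor C A K)
    (h' : Mor C K A) :
  Defs.isometry k -> h' \oc h = idm -> h \oc h' = idm -> closed_mono (k \oc h).
Proof.
move=> kiso hh' h'h; exists (h' \oc h'^*c).
have -> : (k \oc h)^*c \oc (k \oc h) = h^*c \oc h.
  by rewrite starM -compA [k^*c \oc (k \oc h)]compA kiso comp1m.
split.
- by rewrite -compA [h'^*c \oc (h^*c \oc h)]compA -starM h'h star1 comp1m.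
- by rewrite -compA [h \oc (h' \oc h'^*c)]compA h'h comp1m -starM hh' star1.
Qed.

Section IsometricKernels.
Hypothesis isometric_kernel : forall (X Y : Obj C) (f : Mor C X Y),
  exists (K : Obj C) (k : Mor C K X), Defs.isometry k /\ is_kernel f k.

Lemma closed_mono_split (A X : Obj C) (f : Mor C A X) (r : Mor C X A) :
  r \oc f = idm -> closed_mono f.
Proof.
move=> rf.
have [K [k [kiso [ek0 kker]]]] := isometric_kernel (idm - f \oc r).
have ef0 : (idm - f \oc r) \oc f = 0.
  by rewrite compBl comp1m -compA rf compm1 subrr.
have [h [kh _]] := kker _ _ ef0.
have fk : f \oc (r \oc k) = k.
  by rewrite compA; apply/esym/eqP; rewrite -subr_eq0 -{1}[k]comp1m -compBl ek0.
rewrite -kh; apply: (closed_mono_isometry_comp (h' := r \oc k) kiso).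
- by rewrite -compA kh rf.
- by rewrite -[h \oc _]comp1m -kiso -compA [k \oc _]compA kh fk.
Qed.

End IsometricKernels.

Section ZeroObject.
Variable Z : Obj C.
Hypothesis HZ : is_zero_object Z.

Lemma star0 (X Y : Obj C) : (0 : Mor C X Y)^*c = 0.
Proof.
have -> : (0 : Mor C X Y) = (0 : Mor C Z Y) \oc (0 : Mor C X Z) by rewrite compm0.
have [[a Ha] _] := HZ Y.
by rewrite starM (Ha ((0 : Mor C Z Y)^*c)) -(Ha 0) compm0.
Qed.

Lemma orthogonal_cospan_lt n (X : Obj C) (A : nat -> Obj C)
    (f : forall k, Mor C (A k) X) :
  (forall j k, (j < k < n)%N -> (f j)^*c \oc f k = 0) -> orthogonal_cospan n f.
Proof.
move=> orth j k jn kn /eqP; case: ltngtP => // [jk | kj] _.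
- by apply: orth; rewrite jk.
- by rewrite -star_comp_star orth ?kj // star0.
Qed.

Definition is_finite_coproduct (m : nat) (U : Obj C) (A : nat -> Obj C)
    (inj : forall k, Mor C (A k) U) : Prop :=
  (forall Y (f : forall k, Mor C (A k) Y),
     exists g : Mor C U Y, forall k, (k < m)%N -> g \oc inj k = f k) /\
  (forall Y (g g' : Mor C U Y),
     (forall k, (k < m)%N -> g \oc inj k = g' \oc inj k) -> g = g').

Hypothesis biproduct : forall A B : Obj C,
  exists (P : Obj C) (s1 : Mor C A P) (r1 : Mor C P A) (s2 : Mor C B P)
    (r2 : Mor C P B), is_orthonormal_biproduct s1 r1 s2 r2.

Lemma finite_coproduct_exists (A : nat -> Obj C) m :
  exists (U : Obj C) (inj : forall k, Mor C (A k) U), is_finite_coproduct m inj.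
Proof.
elim: m => [|m [U [inj [cotuple cotuple_uniq]]]].
  exists Z, (fun k => 0); split=> [Y f | Y g g' _]; first by exists 0.
  by have [_ [a Ha]] := HZ Y; rewrite (Ha g) (Ha g').
have [P [s1 [_ [s2 [_ [[_ [_ [_ [_ [_ copair]]]]] _]]]]]] := biproduct U (A m).
pose inj' k : Mor C (A k) P :=
  if k =P m is ReflectT e then ecast i (Mor C (A i) P) (esym e) s2
  else s1 \oc inj k.
have inj'_lt k : (k < m)%N -> inj' k = s1 \oc inj k.
  by move=> km; rewrite /inj'; case: eqP => // e; rewrite e ltnn in km.
have inj'_last : inj' m = s2.
  by rewrite /inj'; case: eqP => // e; rewrite (eq_irrelevance e erefl).
exists P, inj'; split=> [Y f | Y g g' eq_g].
  have [g0 Hg0] := cotuple Y f.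
  have [h [[h1 h2] _]] := copair Y g0 (f m).
  exists h => k; rewrite ltnS leq_eqVlt => /orP [/eqP -> | km].
    by rewrite inj'_last.
  by rewrite inj'_lt // compA h1 Hg0.
have eq1 : g \oc s1 = g' \oc s1.
  apply: cotuple_uniq => k km; rewrite -!compA -inj'_lt //.
  by apply: eq_g; rewrite ltnS ltnW.
have eq2 : g \oc s2 = g' \oc s2 by rewrite -inj'_last; apply: eq_g.
have [h [_ h_uniq]] := copair Y (g \oc s1) (g \oc s2).
by rewrite (h_uniq g) // (h_uniq g') // -?eq1 -?eq2.
Qed.

End ZeroObject.

Lemma split_cotuple_union m (U X : Obj C) (A : nat -> Obj C)
    (inj : forall k, Mor C (A k) U) (f : forall k, Mor C (A k) X)
    (u : Mor C U X) (rho : Mor C X U) :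
  is_finite_coproduct m inj -> (forall k, (k < m)%N -> u \oc inj k = f k) ->
  rho \oc u = idm -> is_union u f m.
Proof.
move=> [cotuple cotuple_uniq] uinj rhou; split; last split.
- move=> W g h e.
  by rewrite -[g]comp1m -rhou -compA e compA rhou comp1m.
- by move=> k km; exists (inj k); rewrite uinj.
move=> V v vmono fv.
have fact k : exists h : Mor C (A k) V, (k < m)%N -> f k = v \oc h.
  case: (ltnP k m) => km; last by exists 0.
  by have [h Hh] := fv k km; exists h.
pose h k := proj1_sig (constructive_indefinite_description _ (fact k)).
have vh k : (k < m)%N -> f k = v \oc h k.
  by rewrite /h; case: constructive_indefinite_description.
have [g Hg] := cotuple V h.
exists g; apply: cotuple_uniq => k km.
by rewrite uinj // -compA Hg // vh.
Qed.

Lemma split_cospan_union n (X : Obj C) (A : nat -> Obj C)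
    (s : forall k, Mor C (A k) X) m (U : Obj C) (inj : forall k, Mor C (A k) U) :
  split_cospan n s -> (m <= n)%N -> is_finite_coproduct m inj ->
  exists u : Mor C U X, is_union u s m.
Proof.
move=> [r [rs1 rs0]] mn coprod.
have [u uinj] := coprod.1 X s.
exists u; apply: (split_cotuple_union coprod uinj (rho := \sum_(k < m) (inj k \oc r k))).
apply: coprod.2 => i im; have i_n := leq_trans im mn.
rewrite -compA uinj // comp1m comp_suml (bigD1 (Ordinal im)) //= big1 ?addr0.
  by rewrite -compA rs1 ?compm1.
move=> k /eqP ki; rewrite -compA rs0 ?compm0 ?(leq_trans (ltn_ord k) mn) //.
by move=> e; apply: ki; apply: val_inj.
Qed.

Section MorphismIdeals.
Variable X : Obj C.

Record mor_ideal (P : forall B : Obj C, Mor C B X -> Prop) : Prop := MorIdeal {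
  ideal0 : forall B, P B 0;
  idealB : forall B (g g' : Mor C B X), P B g -> P B g' -> P B (g - g');
  ideal_comp : forall B B' (g : Mor C B X) (h : Mor C B' B), P B g -> P B' (g \oc h)
}.

Definition in_span (A : nat -> Obj C) (f : forall k, Mor C (A k) X) (m : nat)
    (B : Obj C) (g : Mor C B X) : Prop :=
  forall P, mor_ideal P -> (forall k, (k < m)%N -> P (A k) (f k)) -> P B g.

Lemma idealD (P : forall B : Obj C, Mor C B X -> Prop) (idealP : mor_ideal P) B (g g' : Mor C B X) : P B g -> P B g' -> P B (g + g').
Proof.
move=> Pg Pg'; have -> : g + g' = g - (0 - g') by rewrite sub0r opprK.
by do 2!apply: (idealB idealP) => //; apply: ideal0.
Qed.

Lemma ideal_sum (P : forall B : Obj C, Mor C B X -> Prop) (idealP : mor_ideal P) B m (F : 'I_m -> Mor C B X) :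
  (forall i, P B (F i)) -> P B (\sum_(i < m) F i).
Proof. by move=> PF; apply: big_ind => //; [apply: ideal0 | apply: idealD]. Qed.

Lemma ideal_comp3 (P : forall B : Obj C, Mor C B X -> Prop) (idealP : mor_ideal P) B0 B1 B2 B3 (g : Mor C B0 X) (h1 : Mor C B1 B0)
    (h2 : Mor C B2 B1) (h3 : Mor C B3 B2) :
  P B0 g -> P B3 (g \oc h1 \oc h2 \oc h3).
Proof. by move=> Pg; do 3!apply: (ideal_comp idealP). Qed.

End MorphismIdeals.

Lemma in_span_ideal (X : Obj C) (A : nat -> Obj C) (f : forall k, Mor C (A k) X) m :
  mor_ideal (in_span f m).
Proof.
split=> [B Q Q_ideal _ | B g g' Pg Pg' Q Q_ideal Qf | B B' g h Pg Q Q_ideal Qf].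
- exact: ideal0.
- by apply: (idealB Q_ideal); [apply: Pg | apply: Pg'].
- by apply: (ideal_comp Q_ideal); apply: Pg.
Qed.

Lemma in_span_gen (X : Obj C) (A : nat -> Obj C) (f : forall k, Mor C (A k) X) m k :
  (k < m)%N -> in_span f m (f k).
Proof. by move=> km Q _ Qf; apply: Qf. Qed.

Lemma in_span_widen (X : Obj C) (A : nat -> Obj C) (f : forall k, Mor C (A k) X)
    m m' B (g : Mor C B X) :
  (m <= m')%N -> in_span f m g -> in_span f m' g.
Proof. by move=> mm' fg Q Q_ideal Qf; apply: fg => // k km; apply/Qf/(leq_trans km). Qed.

Lemma sub_le_ideal (X V : Obj C) (v : Mor C V X) :
  mor_ideal (fun B (g : Mor C B X) => sub_le g v).
Proof.
split=> [B | B g g' [h ->] [h' ->] | B B' g h [h' ->]].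
- by exists 0; rewrite compm0.
- by exists (h - h'); rewrite compBr.
- by exists (h' \oc h); rewrite compA.
Qed.

Lemma annihilator_ideal (X Y : Obj C) (q : Mor C X Y) :
  mor_ideal (fun B (g : Mor C B X) => q \oc g = 0).
Proof.
split=> [B | B g g' e e' | B B' g h e].
- by rewrite compm0.
- by rewrite compBr e e' subrr.
- by rewrite compA e comp0m.
Qed.

Lemma is_union_same_span (X U : Obj C) (A : nat -> Obj C)
    (f g : forall k, Mor C (A k) X) m (u : Mor C U X) :
  (forall k, (k < m)%N -> in_span f m (g k)) ->
  (forall k, (k < m)%N -> in_span g m (f k)) ->
  is_union u f m -> is_union u g m.
Proof.
move=> g_f f_g [umono [fu u_least]]; split=> //; split=> [k km | V v vmono gv].
- exact: (g_f k km _ (sub_le_ideal u)).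
- apply: u_least => // k km; exact: (f_g k km _ (sub_le_ideal v)).
Qed.

Section GramSchmidt.
Variables (n : nat) (X : Obj C) (A : nat -> Obj C) (s t : forall k, Mor C (A k) X).
Hypothesis t0 : (0 < n)%N -> t 0%N = s 0%N.
Hypothesis tS : forall m : nat, (m.+1 < n)%N ->
  t m.+1 = s m.+1 -
    \sum_(k < m.+1) (t k \oc minv ((t k)^*c \oc t k) \oc (t k)^*c \oc s m.+1).

Lemma gram_schmidt_in_span_s k : (k < n)%N -> in_span s k.+1 (t k).
Proof.
elim/ltn_ind: k => [[_ n_gt0 | m IH mn]]; first by rewrite t0 //; apply: in_span_gen.
rewrite tS //; apply: (idealB (in_span_ideal _ _)); first exact: in_span_gen.
apply: (ideal_sum (in_span_ideal _ _)) => i; apply: (ideal_comp3 (in_span_ideal _ _)).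
apply: (in_span_widen (m := i.+1)); first by rewrite ltnS ltnW.
exact: IH (ltn_trans _ mn).
Qed.

Lemma gram_schmidt_in_span_t k : (k < n)%N -> in_span t k.+1 (s k).
Proof.
case: k => [n_gt0 | m mn]; first by rewrite -t0 //; apply: in_span_gen.
move/eqP: (tS mn); rewrite eq_sym subr_eq => /eqP ->.
apply: (idealD (in_span_ideal _ _)); first exact: in_span_gen.
apply: (ideal_sum (in_span_ideal _ _)) => i; apply: (ideal_comp3 (in_span_ideal _ _)).
by apply: in_span_gen; rewrite ltnS ltnW.
Qed.

Lemma gram_schmidt_same_union m (U : Obj C) (u : Mor C U X) :
  (m <= n)%N -> is_union u s m -> is_union u t m.
Proof.
move=> mn; apply: is_union_same_span => k km.
- exact: in_span_widen km (gram_schmidt_in_span_s (leq_trans km mn)).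
- exact: in_span_widen km (gram_schmidt_in_span_t (leq_trans km mn)).
Qed.

Section Retraction.
Variable r : forall k, Mor C X (A k).
Hypothesis rs1 : forall k, (k < n)%N -> r k \oc s k = idm.
Hypothesis rs0 : forall j k, (j < n)%N -> (k < n)%N -> j <> k -> r k \oc s j = 0.

Lemma gram_schmidt_retraction_lt i k : (k < i < n)%N -> r i \oc t k = 0.
Proof.
case/andP=> ki i_n; have k_n := ltn_trans ki i_n.
apply: (gram_schmidt_in_span_s k_n (annihilator_ideal (r i))) => j jk.
apply: rs0 => //; first exact: leq_trans jk k_n.
by move=> e; move: jk; rewrite e ltnS leqNgt ki.
Qed.

Lemma gram_schmidt_retraction k : (k < n)%N -> r k \oc t k = idm.
Proof.
case: k => [n_gt0 | m mn]; first by rewrite t0 // rs1.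
rewrite tS // compBr comp_sumr big1 ?subr0 ?rs1 // => i _.
by rewrite !compA gram_schmidt_retraction_lt ?mn ?andbT // !comp0m.
Qed.

End Retraction.

Variable Z : Obj C.
Hypothesis HZ : is_zero_object Z.
Hypothesis t_closed : forall k, (k < n)%N -> closed_mono (t k).

Lemma gram_schmidt_orthogonal_lt j m : (j < m < n)%N -> (t j)^*c \oc t m = 0.
Proof.
elim/ltn_ind: m j => [[// | m IH]] j /andP [jm mn].
have j_n := ltn_trans jm mn.
rewrite tS // compBr comp_sumr (bigD1 (Ordinal jm)) //= big1 ?addr0 => [|i /eqP ij].
  have [_ tt_minv] := minvP (t_closed j_n).
  by rewrite !compA tt_minv comp1m subrr.
have i_n := ltn_trans (ltn_ord i) mn.
rewrite !compA; case: (ltngtP j i) => [ji | i_j | e].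
- by rewrite IH ?ji // !comp0m.
- by rewrite -star_comp_star IH ?i_j ?i_n // (star0 HZ) !comp0m.
- by case: ij; apply: val_inj.
Qed.

End GramSchmidt.

End AdditiveStarCategory.

Unset Implicit Arguments.

Theorem proposition4p4 (C : starcat) (HC : pre_Hilbert C)
    (n : nat) (X : Obj C) (A : nat -> Obj C) (s : forall k, Mor C (A k) X)
    (Hsplit : split_cospan n s)
    (t : forall k, Mor C (A k) X)
    (Ht0 : (0 < n)%N -> t 0%N = s 0%N)
    (HtS : forall m : nat, (m.+1 < n)%N ->
       t m.+1 = s m.+1 -
         \sum_(k < m.+1) (t k \oc minv ((t k)^*c \oc t k) \oc (t k)^*c \oc s m.+1)) :
  orthogonal_cospan n t /\
  (forall k, (k < n)%N -> closed_mono (t k)) /\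
  (forall m, (0 < m)%N -> (m <= n)%N ->
     exists (U : Obj C) (u : Mor C U X), is_union u t m /\ is_union u s m).
Proof.
move: HC => [HA [[Z HZ] [biprod [ker _]]]].
have [r [rs1 rs0]] := Hsplit.
have t_closed k (kn : (k < n)%N) : closed_mono (t k).
  exact: (closed_mono_split HA ker (gram_schmidt_retraction HA Ht0 HtS rs1 rs0 kn)).
split; last split => // m _ mn.
  exact: (orthogonal_cospan_lt HA HZ (gram_schmidt_orthogonal_lt HA HtS HZ t_closed)).
have [U [inj coprod]] := finite_coproduct_exists HA HZ biprod A m.
have [u s_union] := split_cospan_union HA Hsplit mn coprod.
by exists U, u; split; first exact: (gram_schmidt_same_union HA Ht0 HtS mn s_union).
Qed.
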